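(* Let $(\mathcal{V},\mathcal{I})$ be a finite connected graph with vertex set $\mathcal{V}$ and set of unoriented edges $\mathcal{I}$ (each pair of vertices joined by at most one edge), with $N$ edges, each edge $(i,j)$ having length $L_{ij}>0$. Let $(S_i)_{i\in\mathcal{V}}$ satisfy $\sum_{i\in\mathcal{V}}S_i=0$, and let $\nu>0$ and $0<\gamma<1$. For a vector of conductivities $C=(C_{ij})\in\mathbb{R}^N_+$, let pressures $(P_i)_{i\in\mathcal{V}}$ solve the Kirchhoff law $$\sum_{j\in N(i)} C_{ij}\frac{P_i-P_j}{L_{ij}}=S_i\quad\text{for all }i\in\mathcal{V},$$ and define fluxes $Q_{ij}[C]=C_{ij}\frac{P_i-P_j}{L_{ij}}$, and the energy $$E[C]=\sum_{(i,j)\in\mathcal{I},\,i<j}\Big(\frac{Q_{ij}[C]^2}{C_{ij}}+\frac{\nu}{\gamma}C_{ij}^\gamma\Big)L_{ij}.$$ Then the global minimizer $C\in\mathbb{R}^N_+$ of $E$ constrained by the Kirchhoff law contains no loops, i.e., there exists no closed circle of edges $\{(i_1,i_2),(i_2,i_3),\dots,(i_K,i_1)\}\subset\mathcal{I}$ such that the fluxes $Q_{i_1i_2},Q_{i_2i_3},\dots,Q_{i_Ki_1}$ are all nonzero.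
   Context: $N(i)$ denotes the set of neighbours of vertex $i$. Fluxes are oriented: $Q_{ij}=-Q_{ji}$. The sum over $i<j$ counts each unoriented edge once. For a given $C$, the Kirchhoff system is solvable (uniquely up to an additive constant) when the graph formed by edges with positive conductivity is connected. *)

From HB Require Import structures.
From mathcomp Require Import all_boot all_order all_algebra.
From mathcomp Require Import reals exp.
Set Implicit Arguments. Unset Strict Implicit. Unset Printing Implicit Defensive.
Import Order.TTheory GRing.Theory Num.Theory.
Local Open Scope ring_scope.

(* Vertices are 'I_n; the graph is a symmetric irreflexive relation e.
   Conductivities C, lengths L are functions on pairs of vertices; only
   their values on edges matter. *)

Definition flux (R : realType) (n : nat) (L C : 'I_n -> 'I_n -> R)
  (P : 'I_n -> R) (i j : 'I_n) : R :=
  C i j * (P i - P j) / L i j.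

Definition kirchhoff (R : realType) (n : nat) (e : rel 'I_n)
  (L : 'I_n -> 'I_n -> R) (S : 'I_n -> R)
  (C : 'I_n -> 'I_n -> R) (P : 'I_n -> R) : Prop :=
  forall i : 'I_n, \sum_(j < n | e i j) flux L C P i j = S i.

(* Admissible (C, P): C is a nonnegative conductivity on the unoriented
   edges (symmetric) and P solves the Kirchhoff law for C. *)
Definition admissible (R : realType) (n : nat) (e : rel 'I_n)
  (L : 'I_n -> 'I_n -> R) (S : 'I_n -> R)
  (C : 'I_n -> 'I_n -> R) (P : 'I_n -> R) : Prop :=
  [/\ forall i j, e i j -> 0 <= C i j,
      forall i j, C i j = C j i &
      kirchhoff e L S C P].

(* Energy E[C] = sum_{(i,j) edge, i<j} (Q_ij^2 / C_ij + nu/gamma C_ij^gamma) L_ij.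
   Convention: x / 0 = 0 in MathComp (when C_ij = 0 the flux is 0 too). *)
Definition energy (R : realType) (n : nat) (e : rel 'I_n)
  (L : 'I_n -> 'I_n -> R) (nu gamma : R)
  (C : 'I_n -> 'I_n -> R) (P : 'I_n -> R) : R :=
  \sum_(i < n) \sum_(j < n | (i < j)%N && e i j)
     ((flux L C P i j) ^+ 2 / C i j + nu / gamma * powR (C i j) gamma) * L i j.

(* Perturb the conductivities along the loop.  Let sigma be the unit circulation
   around the loop and a_ij = sigma_ij / Q_ij.  The conductivities C_ij (1 + t a_ij)
   keep the pressures P admissible, since the added flux t sigma is divergence
   free; they multiply Q_ij by 1 + t a_ij, so that the energy of edge ij becomes
   (1 + y) Q^2 L / C + (1 + y)^gamma nu/gamma C^gamma L with y = t a_ij.  This is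
   affine plus strictly concave in y because gamma < 1, hence
   E(C_t) + E(C_-t) < 2 E(C) for small t > 0, and C is not a global minimiser.
   Connectivity and sum S = 0 only make the Kirchhoff system solvable; the
   argument does not use them. *)

From HB Require Import structures.
From mathcomp Require Import all_boot all_order all_algebra.
From mathcomp Require Import reals exp.
From mathcomp Require Import ring lra.
Import Order.TTheory GRing.Theory Num.Theory.
Local Open Scope ring_scope.

Section Bernoulli.
Context {R : realType}.
Implicit Types x g : R.

Lemma ln_le_subr1 {x} : 0 < x -> ln x <= x - 1.
Proof. by move=> x_gt0; have := expR_ge1Dx (ln x); rewrite lnK ?posrE //; lra. Qed.

Lemma ln_lt_subr1 {x} : 0 < x -> x != 1 -> ln x < x - 1.
Proof.
move=> x_gt0 x_neq1; have lnx0 : ln x != 0 by rewrite ln_eq0.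
by have := expR_gt1Dx lnx0; rewrite lnK ?posrE //; lra.
Qed.

Lemma powR1D_lt g x : 0 < g -> g < 1 -> -1 < x -> x != 0 ->
  powR (1 + x) g < 1 + g * x.
Proof.
move=> g_gt0 g_lt1 x_gtN1 x_neq0.
have pos1x : 0 < 1 + x by lra.
have pos1gx : 0 < 1 + g * x by nra.
set u := (1 + x) / (1 + g * x); set v := (1 + g * x)^-1.
have u_gt0 : 0 < u by rewrite divr_gt0.
have v_gt0 : 0 < v by rewrite invr_gt0.
have u_neq1 : u != 1.
  rewrite -subr_eq0 (_ : u - 1 = (1 - g) * x / (1 + g * x)).
    by rewrite !mulf_neq0 ?invr_eq0 ?(gt_eqF pos1gx) // subr_eq0 (gt_eqF g_lt1).
  by rewrite /u; field; rewrite gt_eqF.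
have lnu : ln u = ln (1 + x) - ln (1 + g * x) by rewrite ln_div ?posrE.
have lnv : ln v = - ln (1 + g * x) by rewrite lnV ?posrE.
have hu := ln_lt_subr1 u_gt0 u_neq1; have hv := ln_le_subr1 v_gt0.
(* combine hu and hv with weights g and 1 - g: the right-hand sides cancel *)
have uv0 : g * (u - 1) + (1 - g) * (v - 1) = 0 by rewrite /u /v; field; rewrite gt_eqF.
have : g * ln (1 + x) < ln (1 + g * x) by nra.
by rewrite /powR gt_eqF // -ltr_expR lnK ?posrE.
Qed.
End Bernoulli.

Section EdgeEnergy.
Context {R : realType}.
Variables nu g : R.
Hypotheses (g_gt0 : 0 < g) (g_lt1 : g < 1).

Lemma powR_sym_sum_lt x : `|x| < 1 -> x != 0 -> powR (1 + x) g + powR (1 - x) g < 2.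
Proof.
rewrite ltr_norml => /andP[x_gtN1 x_lt1] x0.
have x_ltN1 : -1 < - x by lra.
have Nx0 : - x != 0 by rewrite oppr_eq0.
have := powR1D_lt _ _ g_gt0 g_lt1 x_gtN1 x0.
have := powR1D_lt _ _ g_gt0 g_lt1 x_ltN1 Nx0; lra.
Qed.

Lemma powR_sym_sum_le x : `|x| < 1 -> powR (1 + x) g + powR (1 - x) g <= 2.
Proof.
have [-> _|x0 /powR_sym_sum_lt/(_ x0)/ltW //] := eqVneq x 0.
by rewrite subr0 addr0 powR1; lra.
Qed.

Definition edge_energy (l c q : R) := (q ^+ 2 / c + nu / g * powR c g) * l.

Lemma edge_energy_scale l c q y : 0 <= c -> 0 < 1 + y ->
  edge_energy l (c * (1 + y)) ((1 + y) * q)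
  = (1 + y) * (q ^+ 2 / c * l) + powR (1 + y) g * (nu / g * powR c g * l).
Proof.
move=> c_ge0 y_gtN1; rewrite /edge_energy powRM ?(ltW y_gtN1) // invfM.
(* for c = 0 the flux terms vanish on both sides, as x / 0 = 0 *)
have [->|c_neq0] := eqVneq c 0; first by rewrite invr0 !(mulr0, mul0r); ring.
by field; rewrite c_neq0 !gt_eqF.
Qed.

Lemma edge_energy_midpoint l c q y : 0 <= c -> `|y| < 1 ->
  edge_energy l (c * (1 + y)) ((1 + y) * q) + edge_energy l (c * (1 - y)) ((1 - y) * q)
  = 2 * edge_energy l c q
    + (powR (1 + y) g + powR (1 - y) g - 2) * (nu / g * powR c g * l).
Proof.
rewrite ltr_norml => c_ge0 /andP[y_gtN1 y_lt1].
rewrite !edge_energy_scale //; try lra.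
by rewrite /edge_energy; ring.
Qed.
End EdgeEnergy.

Section CycleFlow.
Context {R : pzRingType} {T : finType} (s : seq T).

Definition cycle_arc (i j : T) := (i \in s) && (j == next s i).

Definition cycle_flow (i j : T) : R := (cycle_arc i j)%:R - (cycle_arc j i)%:R.

Lemma cycle_flowN i j : cycle_flow j i = - cycle_flow i j.
Proof. by rewrite /cycle_flow opprB. Qed.

Lemma cycle_arc_rel {r : rel T} {i j} : cycle r s -> cycle_arc i j -> r i j.
Proof. by move=> rs /andP[si /eqP ->]; exact: next_cycle rs si. Qed.

Lemma cycle_flow_arc i j : cycle_flow i j != 0 -> cycle_arc i j || cycle_arc j i.
Proof.
by rewrite /cycle_flow; case: (cycle_arc i j); case: (cycle_arc j i); rewrite ?subrr ?eqxx.
Qed.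

Hypothesis s_uniq : uniq s.

Lemma cycle_arcC i j : cycle_arc j i = (i \in s) && (j == prev s i).
Proof.
apply/andP/andP => [[sj /eqP ->]|[si /eqP ->]].
  by rewrite mem_next sj prev_next.
by rewrite mem_prev si next_prev.
Qed.

Lemma sum_cycle_flow (e : rel T) i : symmetric e -> cycle e s ->
  \sum_(j | e i j) cycle_flow i j = 0.
Proof.
move=> e_sym es; rewrite sumrB.
have sum_arc k : (i \in s -> e i k) ->
    \sum_(j | e i j) ((i \in s) && (j == k))%:R = (i \in s)%:R :> R.
  case: (i \in s) => [/(_ isT) eik|_]; last by rewrite big1.
  by rewrite (bigD1 k) //= eqxx big1 ?addr0 // => j /andP[_ /negbTE ->].
under [X in X - _]eq_bigr do rewrite /cycle_arc.
under [X in _ - X]eq_bigr do rewrite cycle_arcC.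
rewrite !sum_arc ?subrr // => si.
  by rewrite e_sym (prev_cycle es si).
exact: next_cycle es si.
Qed.

End CycleFlow.

Lemma cycle_flow_next (R : pzRingType) {T : finType} {s : seq T} :
  uniq s -> (2 < size s)%N -> exists2 i, i \in s & cycle_flow s i (next s i) = 1 :> R.
Proof.
move=> s_uniq; case: s s_uniq (cycle_arcC _ s_uniq) => [|x0 [|x1 [|x2 r]]] //= s_uniq arcC _.
move: s_uniq; rewrite !inE => /andP[/norP[x01 /norP[x02 _]] /andP[/norP[x12 _] _]].
have x1s : x1 \in [:: x0, x1, x2 & r] by rewrite !inE eqxx orbT.
exists x1 => //; rewrite /cycle_flow (arcC x1) /cycle_arc x1s /=.
by rewrite [x1 == x0]eq_sym (negbTE x01) !eqxx [x2 == x0]eq_sym (negbTE x02) subr0.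
Qed.

Lemma ltr_sum_at {R : numDomainType} {I : finType} (P : pred I) (F G : I -> R) i0 :
  P i0 -> (forall i, P i -> F i <= G i) -> F i0 < G i0 ->
  \sum_(i | P i) F i < \sum_(i | P i) G i.
Proof.
move=> Pi0 leFG ltFG0; rewrite (bigD1 i0) //= [ltRHS](bigD1 i0) //= ltr_leD //.
by apply: ler_sum => i /andP[Pi _]; exact: leFG.
Qed.

Lemma exists_small_scale {R : realFieldType} {I : finType} (f : I -> R) :
  exists2 t : R, 0 < t & forall i, `|t * f i| < 1.
Proof.
have sum_ge0 : 0 <= \sum_i `|f i| by apply: sumr_ge0.
have M_gt0 : 0 < 1 + \sum_i `|f i| by lra.
exists (1 + \sum_i `|f i|)^-1 => [|i]; first by rewrite invr_gt0.
rewrite normrM gtr0_norm ?invr_gt0 // mulrC ltr_pdivrMr // mul1r.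
have : `|f i| <= \sum_i `|f i| by rewrite (bigD1 i) //= lerDl sumr_ge0.
lra.
Qed.

Lemma energyE (R : realType) (n : nat) (e : rel 'I_n) (L C : 'I_n -> 'I_n -> R) nu g P :
  energy e L nu g C P = \sum_(i < n) \sum_(j < n | (i < j)%N && e i j)
                          edge_energy nu g (L i j) (C i j) (flux L C P i j).
Proof. by []. Qed.

Section Rescale.
Context {R : realType} {n : nat}.
Variables (e : rel 'I_n) (L : 'I_n -> 'I_n -> R).
Variables (C a : 'I_n -> 'I_n -> R) (P : 'I_n -> R).

Definition rescale (t : R) i j := C i j * (1 + t * a i j).

Lemma flux_rescale t i j : flux L (rescale t) P i j = (1 + t * a i j) * flux L C P i j.
Proof. by rewrite /flux /rescale; ring. Qed.

Lemma admissible_rescale S t :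
  admissible e L S C P -> (forall i j, a i j = a j i) ->
  (forall i, \sum_(j | e i j) a i j * flux L C P i j = 0) ->
  (forall i j, e i j -> -1 <= t * a i j) ->
  admissible e L S (rescale t) P.
Proof.
move=> [C_ge0 C_sym kirC] a_sym a_div ta_ge; split.
- by move=> i j eij; rewrite mulr_ge0 ?C_ge0 // -lerBlDl sub0r ta_ge.
- by move=> i j; rewrite /rescale C_sym a_sym.
move=> i; under eq_bigr do rewrite flux_rescale mulrDl mul1r -mulrA.
by rewrite big_split /= kirC -mulr_sumr a_div mulr0 addr0.
Qed.

Lemma energy_rescale nu g t : energy e L nu g (rescale t) P =
  \sum_(i < n) \sum_(j < n | (i < j)%N && e i j)
     edge_energy nu g (L i j) (C i j * (1 + t * a i j)) ((1 + t * a i j) * flux L C P i j).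
Proof. by apply: eq_bigr => i _; apply: eq_bigr => j _; rewrite flux_rescale. Qed.

Lemma energy_rescale_midpoint_lt (nu g t : R) (i0 j0 : 'I_n) :
  0 < nu -> 0 < g -> g < 1 ->
  (forall i j, e i j -> 0 < L i j) -> (forall i j, e i j -> 0 <= C i j) ->
  (forall i j, e i j -> `|t * a i j| < 1) ->
  (i0 < j0)%N -> e i0 j0 -> 0 < C i0 j0 -> t * a i0 j0 != 0 ->
  energy e L nu g (rescale t) P + energy e L nu g (rescale (- t)) P
  < 2 * energy e L nu g C P.
Proof.
move=> nu_gt0 g_gt0 g_lt1 L_gt0 C_ge0 t_small lt_ij0 e_ij0 C_ij0 a_ij0.
rewrite !energy_rescale energyE !pair_big_dep -big_split mulr_sumr /=.
apply: (@ltr_sum_at _ _ (fun p : 'I_n * 'I_n => (p.1 < p.2)%N && e p.1 p.2) _ _ (i0, j0)).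
- by rewrite /= lt_ij0.
- move=> [i j] /= /andP[_ eij]; rewrite mulNr edge_energy_midpoint ?C_ge0 ?t_small // gerDl.
  rewrite mulr_le0_ge0 ?subr_le0 ?powR_sym_sum_le ?t_small //.
  by rewrite !mulr_ge0 ?invr_ge0 ?powR_ge0 ?ltW ?L_gt0.
rewrite /= mulNr edge_energy_midpoint ?t_small ?(ltW C_ij0) // gtrDl.
rewrite pmulr_llt0 ?subr_lt0 ?powR_sym_sum_lt ?t_small //.
by rewrite !mulr_gt0 ?invr_gt0 ?powR_gt0 ?L_gt0.
Qed.
End Rescale.

Section LoopPerturbation.
Context {R : realType} {n : nat} {e : rel 'I_n} {L : 'I_n -> 'I_n -> R}.
Context {S : 'I_n -> R} {C : 'I_n -> 'I_n -> R} {P : 'I_n -> R} {s : seq 'I_n}.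
Hypotheses (e_sym : symmetric e) (e_irr : irreflexive e).
Hypothesis L_sym : forall i j, L i j = L j i.
Hypothesis adm : admissible e L S C P.
Hypotheses (s_uniq : uniq s) (s_size : (2 < size s)%N) (s_edges : cycle e s).
Hypothesis s_flux : cycle (fun i j => flux L C P i j != 0) s.

Local Notation Q := (flux L C P).
Implicit Types i j : 'I_n.

Lemma fluxN i j : Q j i = - Q i j.
Proof. by case: adm => _ C_sym _; rewrite /flux C_sym L_sym; ring. Qed.

Lemma cycle_flow_flux_neq0 i j : cycle_flow s i j != 0 :> R -> Q i j != 0.
Proof.
move/cycle_flow_arc/orP => [|/(cycle_arc_rel _ s_flux)]; first exact: (cycle_arc_rel _ s_flux).
by rewrite fluxN oppr_eq0.
Qed.

Definition loop_dir i j : R := cycle_flow s i j / Q i j.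

Lemma loop_dirC i j : loop_dir j i = loop_dir i j.
Proof. by rewrite /loop_dir cycle_flowN fluxN invrN mulrNN. Qed.

Lemma loop_dir_fluxE i j : loop_dir i j * Q i j = cycle_flow s i j.
Proof.
have [Q0|Q_neq0] := eqVneq (Q i j) 0; last by rewrite divfK.
rewrite Q0 mulr0; apply/esym/eqP/negPn/negP => /cycle_flow_flux_neq0.
by rewrite Q0 eqxx.
Qed.

Lemma loop_dir_div i : \sum_(j | e i j) loop_dir i j * Q i j = 0.
Proof. by under eq_bigr do rewrite loop_dir_fluxE; exact: sum_cycle_flow. Qed.

Lemma loop_edge : exists i j, [/\ (i < j)%N, e i j, 0 < C i j & loop_dir i j != 0].
Proof.
have [i si flow1] := cycle_flow_next R s_uniq s_size.
set j := next s i in flow1.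
have eij : e i j := next_cycle s_edges si.
have Qij : Q i j != 0 by apply: cycle_flow_flux_neq0; rewrite flow1 oner_neq0.
have Cij : 0 < C i j.
  case: adm => C_ge0 _ _; rewrite lt0r C_ge0 // andbT.
  by apply: contraNneq Qij => C0; rewrite /flux C0 !mul0r.
have aij : loop_dir i j != 0 by rewrite /loop_dir flow1 mul1r invr_eq0.
case: (ltngtP i j) => [lt_ij|lt_ji|/val_inj eq_ij]; first by exists i, j.
  case: adm => _ C_sym _.
  by exists j, i; rewrite e_sym C_sym loop_dirC.
by rewrite eq_ij e_irr in eij.
Qed.

Lemma loop_energy_descent nu g : 0 < nu -> 0 < g -> g < 1 ->
  (forall i j, e i j -> 0 < L i j) ->
  exists C1 C2, [/\ admissible e L S C1 P, admissible e L S C2 P &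
    energy e L nu g C1 P + energy e L nu g C2 P < 2 * energy e L nu g C P].
Proof.
move=> nu_gt0 g_gt0 g_lt1 L_gt0.
have [i0 [j0 [lt_ij0 e_ij0 C_ij0 a_ij0]]] := loop_edge.
have [t t_gt0 t_small] := exists_small_scale (fun p : 'I_n * 'I_n => loop_dir p.1 p.2).
have small u i j : `|u| = t -> `|u * loop_dir i j| < 1.
  by move=> u_t; rewrite normrM u_t -(gtr0_norm t_gt0) -normrM (t_small (i, j)).
have adm_u u : `|u| = t -> admissible e L S (rescale C loop_dir u) P.
  move=> u_t; apply: admissible_rescale => // [i j|i|i j _]; first exact: loop_dirC.
    exact: loop_dir_div.
  by have := small u i j u_t; rewrite ltr_norml => /andP[/ltW].
have [C_ge0 _ _] := adm.
exists (rescale C loop_dir t), (rescale C loop_dir (- t)); split.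
- by apply: adm_u; rewrite gtr0_norm.
- by apply: adm_u; rewrite normrN gtr0_norm.
apply: (energy_rescale_midpoint_lt e L C loop_dir P nu g t i0 j0) => // [i j _|].
  by rewrite small ?gtr0_norm.
by rewrite mulf_neq0 ?(gt_eqF t_gt0).
Qed.
End LoopPerturbation.

Theorem theorem2p2 (R : realType) (n : nat) (e : rel 'I_n)
  (L : 'I_n -> 'I_n -> R) (S : 'I_n -> R) (nu gamma : R)
  (e_sym : symmetric e) (e_irr : irreflexive e)
  (e_conn : forall x y : 'I_n, connect e x y)
  (L_sym : forall i j, L i j = L j i)
  (L_pos : forall i j, e i j -> 0 < L i j)
  (S_sum : \sum_(i < n) S i = 0)
  (nu_pos : 0 < nu) (gamma_pos : 0 < gamma) (gamma_lt1 : gamma < 1)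
  (C : 'I_n -> 'I_n -> R) (P : 'I_n -> R)
  (adm : admissible e L S C P)
  (glob_min : forall (C' : 'I_n -> 'I_n -> R) (P' : 'I_n -> R),
      admissible e L S C' P' ->
      energy e L nu gamma C P <= energy e L nu gamma C' P') :
  ~ exists s : seq 'I_n,
      [/\ uniq s, (3 <= size s)%N, cycle e s &
          cycle (fun i j => flux L C P i j != 0) s].
Proof.
move=> [s [s_uniq s_size s_edges s_flux]].
have [C1 [C2 [adm1 adm2 descent]]] := loop_energy_descent e_sym e_irr L_sym adm
  s_uniq s_size s_edges s_flux nu gamma nu_pos gamma_pos gamma_lt1 L_pos.
by have := glob_min _ _ adm1; have := glob_min _ _ adm2; lra.
Qed.
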